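(* Let $\alpha \ge 0$, $\beta > 0$, $d_v > 0$, $\bar x \in \mathbb{R}$, $\bar y \in \mathbb{R}$ and $x_{\max} > 0$, and set $C = \bar y^2 + d_v^2$. For $\tilde x \in \mathbb{R}$ let $\delta = \bar x - \tilde x$ and $$g(\tilde x) = \beta(\delta^2 + C) + \ln(\delta^2 + C) + 2\alpha \tilde x .$$ If $\beta d_v^2 \ge 1$, then $g$ is a strictly convex function of $\tilde x$ on the interval $[0, x_{\max}]$.
   Context: This is the negative logarithm of the normalized average received SNR $e^{-\beta[(\tilde x-\bar x)^2+C]}/\big([(\tilde x-\bar x)^2+C]e^{2\alpha\tilde x}\big)$ of a single pinching antenna at position $(\tilde x,0,d_v)$ on a waveguide along the $x$-axis serving a user at $(\bar x,\bar y,0)$, where $\alpha$ is the in-waveguide attenuation coefficient and $\beta$ the LoS blockage parameter. The feasible set of antenna positions is $[0,x_{\max}]$. *)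

From Stdlib Require Import Reals Lra.
Open Scope R_scope.

Definition strictly_convex_on (f : R -> R) (S : R -> Prop) : Prop :=
  forall x y t, S x -> S y -> x <> y -> 0 < t < 1 ->
    f (t * x + (1 - t) * y) < t * f x + (1 - t) * f y.

Definition g (alpha beta dv xbar ybar : R) (xt : R) : R :=
  let C := ybar ^ 2 + dv ^ 2 in
  let delta := xbar - xt in
  beta * (delta ^ 2 + C) + ln (delta ^ 2 + C) + 2 * alpha * xt.

(** The term [2 alpha xt] is affine, so only [s ↦ beta s^2 + ln (s^2 + C)] with
    [s = xt - xbar] matters.  Its derivative [2 (beta s + s / (s^2 + C))] is
    strictly increasing as soon as [beta C >= 1], and a function with strictly
    increasing derivative is strictly convex by the mean value theorem.  Since
    [C >= dv^2], this makes [g] strictly convex on the whole real line. *)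

From Stdlib Require Import Reals Lra Psatz.
From Coquelicot Require Import Coquelicot.
Open Scope R_scope.

Lemma chord_lt_of_derive_increasing (f f' : R -> R) :
  (forall c, derivable_pt_lim f c (f' c)) ->
  (forall a b, a < b -> f' a < f' b) ->
  forall x y t, x < y -> 0 < t < 1 ->
    f (t * x + (1 - t) * y) < t * f x + (1 - t) * f y.
Proof.
  intros Hd Hinc x y t Hxy Ht.
  set (z := t * x + (1 - t) * y).
  assert (Hxz : x < z) by (unfold z; nra).
  assert (Hzy : z < y) by (unfold z; nra).
  destruct (MVT_cor2 f f' x z Hxz (fun c _ => Hd c)) as [c1 [E1 H1]].
  destruct (MVT_cor2 f f' z y Hzy (fun c _ => Hd c)) as [c2 [E2 H2]].
  assert (Hc : f' c1 < f' c2) by (apply Hinc; lra).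
  replace (z - x) with ((1 - t) * (y - x)) in E1 by (unfold z; ring).
  replace (y - z) with (t * (y - x)) in E2 by (unfold z; ring).
  assert (0 < t * (1 - t) * (y - x) * (f' c2 - f' c1)).
  { repeat apply Rmult_lt_0_compat; lra. }
  nra.
Qed.

Lemma strictly_convex_on_of_derive_increasing (f f' : R -> R) (S : R -> Prop) :
  (forall c, derivable_pt_lim f c (f' c)) ->
  (forall a b, a < b -> f' a < f' b) ->
  strictly_convex_on f S.
Proof.
  intros Hd Hinc x y t _ _ Hxy Ht.
  destruct (Rlt_or_le x y) as [Hlt | Hge].
  - exact (chord_lt_of_derive_increasing f f' Hd Hinc x y t Hlt Ht).
  - replace (t * x + (1 - t) * y) with ((1 - t) * y + (1 - (1 - t)) * x) by ring.
    replace (t * f x + (1 - t) * f y) with ((1 - t) * f y + (1 - (1 - t)) * f x) by ring.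
    apply (chord_lt_of_derive_increasing f f'); auto; lra.
Qed.

Lemma linear_plus_ratio_increasing (beta C a b : R) :
  0 < C -> 1 <= beta * C -> a < b ->
  beta * a + a / (a ^ 2 + C) < beta * b + b / (b ^ 2 + C).
Proof.
  intros HC HbC Hab.
  assert (Ua : 0 < a ^ 2 + C) by nra.
  assert (Ub : 0 < b ^ 2 + C) by nra.
  assert (Hbeta : 0 < beta) by nra.
  assert (Hprod : C * (a ^ 2 + b ^ 2 + C) <= (a ^ 2 + C) * (b ^ 2 + C)) by nra.
  assert (Key : 0 < beta * ((a ^ 2 + C) * (b ^ 2 + C)) + C - a * b).
  { assert (a ^ 2 + b ^ 2 + C <= beta * ((a ^ 2 + C) * (b ^ 2 + C))) by nra.
    nra. }
  assert (Diff : beta * b + b / (b ^ 2 + C) - (beta * a + a / (a ^ 2 + C))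
                 = (b - a) * (beta * ((a ^ 2 + C) * (b ^ 2 + C)) + C - a * b)
                   / ((a ^ 2 + C) * (b ^ 2 + C))).
  { field. lra. }
  assert (0 < (b - a) * (beta * ((a ^ 2 + C) * (b ^ 2 + C)) + C - a * b)
              / ((a ^ 2 + C) * (b ^ 2 + C))).
  { apply Rdiv_lt_0_compat; nra. }
  lra.
Qed.

Lemma derivable_pt_lim_g (alpha beta dv xbar ybar x : R) :
  0 < ybar ^ 2 + dv ^ 2 ->
  let s := x - xbar in
  derivable_pt_lim (g alpha beta dv xbar ybar) x
    (2 * (beta * s + s / (s ^ 2 + (ybar ^ 2 + dv ^ 2))) + 2 * alpha).
Proof.
  intros HC s.
  assert (Hu : 0 < (xbar - x) ^ 2 + (ybar ^ 2 + dv ^ 2))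
    by (pose proof (pow2_ge_0 (xbar - x)); lra).
  apply is_derive_Reals. unfold g, s.
  auto_derive.
  - lra.
  - field. lra.
Qed.

Theorem lemma1 (alpha beta dv xbar ybar xmax : R) :
  0 <= alpha -> 0 < beta -> 0 < dv -> 0 < xmax ->
  beta * dv ^ 2 >= 1 ->
  strictly_convex_on (g alpha beta dv xbar ybar) (fun x => 0 <= x <= xmax).
Proof.
  intros _ Hbeta Hdv _ Hbd.
  set (C := ybar ^ 2 + dv ^ 2).
  assert (HC : 0 < C) by (unfold C; nra).
  assert (HbC : 1 <= beta * C) by (unfold C; nra).
  apply strictly_convex_on_of_derive_increasing with
    (f' := fun x => 2 * (beta * (x - xbar) + (x - xbar) / ((x - xbar) ^ 2 + C)) + 2 * alpha).
  - intro x. exact (derivable_pt_lim_g alpha beta dv xbar ybar x HC).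
  - intros a b Hab.
    pose proof (linear_plus_ratio_increasing beta C (a - xbar) (b - xbar) HC HbC
                  ltac:(lra)).
    lra.
Qed.
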